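(* Let $W$ be a nonempty closed subset of $\mathbb{R}$, let $\alpha,\beta\in\mathrm{Aut}(W)$, $a\in\mathrm{Fix}_W(\alpha)$, $b\in\mathrm{Fix}_W(\beta)$. Suppose $a<b$, $\mathrm{Fix}_W(\alpha)\cap(a,b]=\emptyset$ and $\mathrm{Fix}_W(\beta)\cap[a,b)=\emptyset$. Then $\langle\alpha,\beta\rangle$ contains a nonabelian free subsemigroup.
   Context: $\mathrm{Aut}(W)$ is the group of order preserving bijections of $W$ (with the order induced from $\mathbb{R}$). $\mathrm{Fix}_W(g)$ is the set of points of $W$ fixed by $g$. *)

From Stdlib Require Import Reals Rtopology List.
Open Scope R_scope.

Definition pt (W : R -> Prop) : Type := {x : R | W x}.

Definition is_aut (W : R -> Prop) (f : pt W -> pt W) : Prop :=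
  (exists g : pt W -> pt W, (forall x, g (f x) = x) /\ (forall y, f (g y) = y)) /\
  (forall x y : pt W, proj1_sig x <= proj1_sig y -> proj1_sig (f x) <= proj1_sig (f y)).

Inductive gen2 {T : Type} (f g : T -> T) : (T -> T) -> Prop :=
| gen2_id : gen2 f g (fun x => x)
| gen2_f : gen2 f g f
| gen2_g : gen2 f g g
| gen2_inv : forall h k, gen2 f g h ->
    (forall x, k (h x) = x) -> (forall y, h (k y) = y) -> gen2 f g k
| gen2_comp : forall h k, gen2 f g h -> gen2 f g k -> gen2 f g (fun x => h (k x)).

Fixpoint eval_word {T : Type} (u v : T -> T) (w : list bool) : T -> T :=
  match w with
  | nil => fun x => x
  | b :: w' => fun x => (if b then v else u) (eval_word u v w' x)
  end.

Definition free_semigroup2 {T : Type} (u v : T -> T) : Prop :=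
  forall w1 w2 : list bool, w1 <> nil -> w2 <> nil ->
    eval_word u v w1 = eval_word u v w2 -> w1 = w2.

Definition contains_nonabelian_free_subsemigroup {T : Type} (G : (T -> T) -> Prop) : Prop :=
  exists u v, G u /\ G v /\ free_semigroup2 u v.

(* Replacing alpha, beta by their inverses if necessary, we may assume that f
   fixes a and pushes b down, and g fixes b and pushes a up.  The f-orbit of b
   decreases to its infimum L; L lies in W because W is closed, and it is a
   fixed point of f, so L = a.  Hence u = f^n maps [a, b] into [a, g a) for n
   large, while v = g maps [a, b] into [g a, b]: by the ping-pong argument u
   and v generate a free semigroup. *)

From Stdlib Require Import Reals Rtopology Lra Classical ProofIrrelevance FinFun.
Open Scope R_scope.

Notation val := (@proj1_sig R _).

Lemma pt_eq (W : R -> Prop) (x y : pt W) : val x = val y -> x = y.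
Proof.
  destruct x as [x Hx], y as [y Hy]; simpl; intros <-.
  f_equal; apply proof_irrelevance.
Qed.

Section Automorphisms.

Variable W : R -> Prop.

Lemma is_aut_inj (f : pt W -> pt W) : is_aut W f -> Injective f.
Proof.
  intros [[h [Hhf _]] _] x y E.
  now rewrite <- (Hhf x), <- (Hhf y), E.
Qed.

Lemma is_aut_lt (f : pt W -> pt W) (Hf : is_aut W f) (x y : pt W) :
  val x < val y -> val (f x) < val (f y).
Proof.
  intros Hxy.
  destruct (Rle_lt_or_eq_dec _ _ (proj2 Hf x y (Rlt_le _ _ Hxy))) as [H | H]; [exact H |].
  apply pt_eq, (is_aut_inj f Hf) in H; subst; lra.
Qed.

Lemma is_aut_inv (f h : pt W -> pt W) :
  is_aut W f -> (forall x, h (f x) = x) -> (forall y, f (h y) = y) -> is_aut W h.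
Proof.
  intros Hf Hhf Hfh; split; [now exists f |].
  intros x y Hxy.
  destruct (Rle_or_lt (val (h x)) (val (h y))) as [H | H]; [exact H |].
  assert (K := proj2 Hf _ _ (Rlt_le _ _ H)); rewrite !Hfh in K.
  assert (x = y) by (apply pt_eq; lra); subst; lra.
Qed.

Lemma is_aut_iter (f : pt W -> pt W) (n : nat) : is_aut W f -> is_aut W (Nat.iter n f).
Proof.
  intros [[h [Hhf Hfh]] Hm]; split.
  - exists (Nat.iter n h); split; induction n as [| n IH]; intros x; auto.
    + rewrite (Nat.iter_succ_r n _ h); simpl; rewrite Hhf; apply IH.
    + rewrite (Nat.iter_succ_r n _ h); simpl; rewrite IH; apply Hfh.
  - induction n as [| n IH]; intros x y Hxy; simpl; auto.
Qed.

Lemma is_aut_moves (f h : pt W -> pt W) (x : pt W) :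
  is_aut W f -> (forall x, h (f x) = x) -> (forall y, f (h y) = y) -> f x <> x ->
  (val (f x) < val x /\ val x < val (h x)) \/ (val x < val (f x) /\ val (h x) < val x).
Proof.
  intros Hf Hhf Hfh Hx.
  assert (Hh := is_aut_inv f h Hf Hhf Hfh).
  destruct (total_order_T (val (f x)) (val x)) as [[H | H] | H].
  - left; split; [exact H |].
    rewrite <- (Hhf x) at 1; exact (is_aut_lt h Hh _ _ H).
  - now contradiction (pt_eq W _ _ H).
  - right; split; [exact H |].
    rewrite <- (Hhf x) at 2; exact (is_aut_lt h Hh _ _ H).
Qed.

End Automorphisms.

Lemma gen2_iter {T : Type} (alpha beta f : T -> T) (n : nat) :
  gen2 alpha beta f -> gen2 alpha beta (Nat.iter n f).
Proof.
  intros Hf; induction n as [| n IH]; simpl.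
  - apply gen2_id.
  - exact (gen2_comp _ _ _ _ Hf IH).
Qed.

Section PingPong.

Variables (T : Type) (P : T -> Prop) (u v : T -> T) (x0 : T).
Hypotheses (Hu : Injective u) (Hv : Injective v) (Hx0 : P x0)
  (Pu : forall x, P x -> P (u x)) (Pv : forall x, P x -> P (v x))
  (Huv : forall x y, P x -> P y -> u x <> v y).

Lemma eval_word_stable (w : list bool) (x : T) : P x -> P (eval_word u v w x).
Proof. induction w as [| [] w IH]; simpl; auto. Qed.

(* The empty word is included so that the induction goes through; it is
   separated from a word beginning with one letter by evaluating at the other
   letter applied to [x0]. *)
Lemma eval_word_ext_inj (w1 w2 : list bool) :
  (forall x, eval_word u v w1 x = eval_word u v w2 x) -> w1 = w2.
Proof.
  revert w2; induction w1 as [| [] w1 IH]; intros [| [] w2] E; simpl in E.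
  - reflexivity.
  - exfalso; exact (Huv _ _ Hx0 (eval_word_stable w2 _ (Pu _ Hx0)) (E (u x0))).
  - exfalso; exact (Huv _ _ (eval_word_stable w2 _ (Pv _ Hx0)) Hx0 (eq_sym (E (v x0)))).
  - exfalso; exact (Huv _ _ Hx0 (eval_word_stable w1 _ (Pu _ Hx0)) (eq_sym (E (u x0)))).
  - f_equal; apply IH; intros x; apply Hv, E.
  - exfalso; exact (Huv _ _ (eval_word_stable w2 _ Hx0) (eval_word_stable w1 _ Hx0) (eq_sym (E x0))).
  - exfalso; exact (Huv _ _ (eval_word_stable w1 _ (Pv _ Hx0)) Hx0 (E (v x0))).
  - exfalso; exact (Huv _ _ (eval_word_stable w1 _ Hx0) (eval_word_stable w2 _ Hx0) (E x0)).
  - f_equal; apply IH; intros x; apply Hu, E.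
Qed.

Lemma ping_pong : free_semigroup2 u v.
Proof. intros w1 w2 _ _ E; apply eval_word_ext_inj; intros x; now rewrite E. Qed.

End PingPong.

Lemma ex_inf_seq (s : nat -> R) (m : R) :
  (forall n, m <= s n) ->
  exists L, (forall n, L <= s n) /\ (forall c, L < c -> exists n, s n < c).
Proof.
  intros Hm.
  set (lower := fun r => forall n, r <= s n).
  assert (Hbound : bound lower) by (exists (s O); intros r Hr; apply Hr).
  destruct (completeness lower Hbound (ex_intro _ m Hm)) as [L [HL HLmin]].
  exists L; split.
  - intros n; apply HLmin; intros r Hr; apply Hr.
  - intros c Hc; apply NNPP; intros N.
    assert (lower c) by (intros n; apply Rnot_lt_le; intros H; apply N; now exists n).
    specialize (HL c H); lra.
Qed.

Lemma closed_set_inf_mem (W : R -> Prop) (L : R) :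
  closed_set W -> (forall c, L < c -> exists x, W x /\ L <= x < c) -> W L.
Proof.
  intros HWc HL; apply NNPP; intros NL.
  destruct (HWc L NL) as [del Hdel].
  destruct (HL (L + del)) as [x [Wx Hx]]; [destruct del; simpl; lra |].
  apply (Hdel x); [unfold disc; rewrite Rabs_right; lra | exact Wx].
Qed.

Section Contraction.

Variables (W : R -> Prop) (f : pt W -> pt W) (a b : pt W).
Hypotheses (HWc : closed_set W) (Hf : is_aut W f) (Hab : val a < val b) (Hfa : f a = a)
  (Hfb : val (f b) < val b)
  (HA : forall x : pt W, val a < val x <= val b -> f x <> x).

Let orbit (n : nat) : R := val (Nat.iter n f b).

Lemma orbit_decr (n : nat) : orbit (S n) <= orbit n.
Proof.
  unfold orbit; induction n as [| n IH]; simpl; [lra |].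
  exact (proj2 Hf _ _ IH).
Qed.

Lemma orbit_bounds (n : nat) : val a <= orbit n <= val b.
Proof.
  unfold orbit; induction n as [| n [IH1 IH2]]; simpl; [lra |].
  assert (K := proj2 Hf _ _ IH1); rewrite Hfa in K.
  assert (K' := orbit_decr n); unfold orbit in K'; simpl in K'; lra.
Qed.

Lemma orbit_tends_to_fixed (c : R) : val a < c -> exists n, orbit n < c.
Proof.
  pose proof Hf as [[h [Hhf Hfh]] _].
  assert (Hh := is_aut_inv W f h Hf Hhf Hfh).
  destruct (ex_inf_seq orbit (val a) (fun n => proj1 (orbit_bounds n)))
    as [L [HL Happrox]].
  assert (HaL : val a <= L).
  { apply Rnot_lt_le; intros H.
    destruct (Happrox _ H) as [n Hn]; assert (K := orbit_bounds n); lra. }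
  assert (WL : W L).
  { apply (closed_set_inf_mem W L HWc); intros c' Hc'.
    destruct (Happrox _ Hc') as [n Hn].
    exists (orbit n); split; [apply proj2_sig | split; [apply HL | exact Hn]]. }
  set (l := exist W L WL : pt W).
  assert (Hfl_le : val (f l) <= L).
  { apply Rnot_lt_le; intros H.
    destruct (Happrox _ H) as [n Hn].
    assert (K := proj2 Hf l (Nat.iter n f b) (HL n)).
    assert (K' := orbit_decr n); unfold orbit in *; simpl in *; lra. }
  (* [f l < l] would give [l < h l], and an orbit point in [l, h l) is mapped below l. *)
  assert (Hfl_ge : L <= val (f l)).
  { apply Rnot_lt_le; intros H.
    assert (Hlh : L < val (h l)).
    { assert (K := is_aut_lt W h Hh (f l) l H); rewrite Hhf in K; exact K. }
    destruct (Happrox _ Hlh) as [n Hn].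
    assert (K := is_aut_lt W f Hf (Nat.iter n f b) (h l) Hn); rewrite Hfh in K.
    specialize (HL (S n)); unfold orbit in *; simpl in *; lra. }
  assert (Hfl : f l = l) by (apply pt_eq; simpl; lra).
  assert (HLa : L = val a).
  { destruct (Rle_lt_or_eq_dec _ _ HaL) as [H | H]; [| now symmetry].
    exfalso; apply (HA l); [| exact Hfl].
    simpl; assert (K := HL O); unfold orbit in K; simpl in K; lra. }
  intros Hc; apply Happrox; lra.
Qed.

Lemma ex_free_semigroup2_iter (g : pt W -> pt W) :
  is_aut W g -> g b = b -> val a < val (g a) ->
  exists n, free_semigroup2 (Nat.iter n f) g.
Proof.
  intros Hg Hgb Hga.
  assert (Hfix : forall k, Nat.iter k f a = a) by (induction k; simpl; congruence).
  destruct (orbit_tends_to_fixed _ Hga) as [n Hn]; exists n.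
  assert (Hu := is_aut_iter W f n Hf).
  apply (ping_pong _ (fun x : pt W => val a <= val x <= val b) _ _ a);
    auto using is_aut_inj.
  - simpl; lra.
  - intros x [Hx1 Hx2].
    assert (K1 := proj2 Hu _ _ Hx1); assert (K2 := proj2 Hu _ _ Hx2).
    assert (K := orbit_bounds n); unfold orbit in *.
    rewrite Hfix in K1; lra.
  - intros x [Hx1 Hx2].
    assert (K1 := proj2 Hg _ _ Hx1); assert (K2 := proj2 Hg _ _ Hx2).
    rewrite Hgb in K2; lra.
  - intros x y [_ Hx2] [Hy1 _] E.
    assert (K1 := proj2 Hu _ _ Hx2); assert (K2 := proj2 Hg _ _ Hy1).
    rewrite E in K1; unfold orbit in Hn; lra.
Qed.

End Contraction.

Theorem lemma4p3 (W : R -> Prop) (HWne : exists x, W x) (HWc : closed_set W)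
  (alpha beta : pt W -> pt W) (Ha : is_aut W alpha) (Hb : is_aut W beta)
  (a b : pt W) (Hfa : alpha a = a) (Hfb : beta b = b)
  (Hab : proj1_sig a < proj1_sig b)
  (HA : forall x : pt W, proj1_sig a < proj1_sig x <= proj1_sig b -> alpha x <> x)
  (HB : forall x : pt W, proj1_sig a <= proj1_sig x < proj1_sig b -> beta x <> x) :
  contains_nonabelian_free_subsemigroup (gen2 alpha beta).
Proof.
  pose proof Ha as [[ai [Ha1 Ha2]] _].
  pose proof Hb as [[bi [Hb1 Hb2]] _].
  assert (Hai := is_aut_inv W alpha ai Ha Ha1 Ha2).
  assert (Hbi := is_aut_inv W beta bi Hb Hb1 Hb2).
  assert (Gai := gen2_inv _ _ _ _ (gen2_f alpha beta) Ha1 Ha2).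
  assert (Gbi := gen2_inv _ _ _ _ (gen2_g alpha beta) Hb1 Hb2).
  assert (Hai_a : ai a = a) by (rewrite <- Hfa at 1; apply Ha1).
  assert (Hbi_b : bi b = b) by (rewrite <- Hfb at 1; apply Hb1).
  assert (HAi : forall x, val a < val x <= val b -> ai x <> x).
  { intros x Hx E; apply (HA x Hx); rewrite <- E at 1; apply Ha2. }
  assert (Hf : exists f, gen2 alpha beta f /\ is_aut W f /\ f a = a /\
    val (f b) < val b /\ forall x, val a < val x <= val b -> f x <> x).
  { destruct (is_aut_moves W alpha ai b Ha Ha1 Ha2 (HA b (conj Hab (Rle_refl _))))
      as [[H _] | [_ H]]; [exists alpha | exists ai]; auto using gen2_f. }
  assert (Hg : exists g, gen2 alpha beta g /\ is_aut W g /\ g b = b /\ val a < val (g a)).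
  { destruct (is_aut_moves W beta bi a Hb Hb1 Hb2 (HB a (conj (Rle_refl _) Hab)))
      as [[_ H] | [H _]]; [exists bi | exists beta]; auto using gen2_g. }
  destruct Hf as (f & Gf & Hf & Hfa' & Hfb' & HA').
  destruct Hg as (g & Gg & Hg & Hgb & Hga).
  destruct (ex_free_semigroup2_iter W f a b HWc Hf Hab Hfa' Hfb' HA' g Hg Hgb Hga) as [n Hfree].
  exists (Nat.iter n f), g; auto using gen2_iter.
Qed.
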